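(* Let $G=(V,E)$ be a simple undirected graph with $m=|E|$ and maximum degree $\Delta$, $b:V\to\mathbb{Z}_{\ge0}$ with $\beta=\max_v b(v)$, and $f:2^E\to\mathbb{R}_{\ge0}$ a normalized monotone submodular function satisfying the local dependence assumption. Then the Local Lazy Greedy algorithm runs in $O(\beta\, m\log\Delta)$ time.
   Context: Local dependence assumption: the marginal gain $\rho_e(A)=f(A\cup\{e\})-f(A)$ of an edge $e$ depends only on the edges of $A$ sharing an endpoint with $e$. A $b$-matching is $M\subseteq E$ with $|M\cap\delta(v)|\le b(v)$ for all $v$ ($\delta(v)$ = edges incident to $v$); $v$ is saturated if equality holds and available otherwise; an edge is available w.r.t. $M$ if it is not in $M$ and both endpoints are unsaturated. Local Lazy Greedy: $M=\emptyset$; for each vertex $v$ keep a max-heap $pq(v)$ of its incident edges keyed by (possibly stale) marginal gains, initially $f(\{e\})$. While some edge not in $M$ has both endpoints available, repeat: (update step) for each available vertex $v$, perform lazy evaluation on $pq(v)$: repeatedly take the top edge, recompute its marginal gain w.r.t. $M$, discard it if unavailable, re-insert it with the new key if the new gain is less than the key of the next edge, and otherwise stop; set $pointer(v)$ to the resulting best available incident edge; (matching step) for each available vertex $u$, let $v$ be the other endpoint of $pointer(u)$; if $v$ is available and $pointer(v)=pointer(u)$, add this edge to $M$. In the implementation, the update and matching steps iterate only over vertices whose status may have changed (the endpoints of newly matched edges and their available neighbors, respectively the vertices whose pointers changed). Running time counts each marginal gain evaluation and availability check as constant time. *)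

From HB Require Import structures.
From mathcomp Require Import all_boot all_order all_algebra.
Set Implicit Arguments. Unset Strict Implicit. Unset Printing Implicit Defensive.
Import Order.TTheory GRing.Theory Num.Theory.
Local Open Scope ring_scope.

Section LocalLazyGreedy.
Variables (R : realFieldType) (V E : finType) (src dst : E -> V).
Variables (b : V -> nat) (f : {set E} -> R) (rank : E -> nat).

Definition delta (v : V) : {set E} := [set e | (src e == v) || (dst e == v)].
Definition simple_graph : Prop :=
  (forall e, src e != dst e) /\
  (forall e1 e2, [set src e1; dst e1] = [set src e2; dst e2] -> e1 = e2).
Definition nbr_edges (e : E) : {set E} := delta (src e) :|: delta (dst e).
Definition maxdeg : nat := (\max_(v : V) #|delta v|)%N.
Definition beta : nat := (\max_(v : V) b v)%N.
Definition other (e : E) (u : V) : V := if src e == u then dst e else src e.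

Definition rho (M : {set E}) (e : E) : R := f (e |: M) - f M.
Definition normalized : Prop := f set0 = 0.
Definition nonneg : Prop := forall A, 0 <= f A.
Definition monotone : Prop := forall A B : {set E}, A \subset B -> f A <= f B.
Definition submodular : Prop :=
  forall A B : {set E}, f (A :|: B) + f (A :&: B) <= f A + f B.
Definition local_dependence : Prop :=
  forall e A, rho A e = rho (A :&: nbr_edges e) e.

Definition saturated (M : {set E}) (v : V) : bool := #|M :&: delta v| == b v.
Definition availv (M : {set E}) (v : V) : bool := ~~ saturated M v.
Definition avail_edge (M : {set E}) (e : E) : bool :=
  [&& e \notin M, availv M (src e) & availv M (dst e)].

(* max-heaps, modelled by their contents; keys compared lexicographically
   (key, rank), rank being a fixed tie-breaking order on edges *)
Definition keylt (x y : R * E) : bool :=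
  (x.1 < y.1) || ((x.1 == y.1) && (rank x.2 < rank y.2)%N).
Fixpoint hmax (h : seq (R * E)) : option (R * E) :=
  match h with
  | [::] => None
  | x :: t => match hmax t with
              | None => Some x
              | Some y => Some (if keylt y x then x else y)
              end
  end.
(* cost of one heap operation on a heap of size s : floor(log2 s) + 1 *)
Definition hcost (h : seq (R * E)) : nat := (trunc_log 2 (size h)).+1.

(* lazy evaluation on one heap, w.r.t. matching M; returns
   (new heap, resulting pointer, cost); None = fuel exhausted *)
Fixpoint lazy_eval (n : nat) (M : {set E}) (h : seq (R * E))
  : option (seq (R * E) * option E * nat) :=
  match n with
  | 0 => None
  | n'.+1 =>
    match hmax h with
    | None => Some (h, None, 1%N)
    | Some x =>
      let h1 := rem x h in
      let e := x.2 in
      if ~~ avail_edge M e then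
        (* pop and discard: one heap op + one availability check *)
        omap (fun r => (r.1.1, r.1.2, (r.2 + hcost h + 1)%N)) (lazy_eval n' M h1)
      else
        let g := rho M e in
        match hmax h1 with
        | Some y =>
          if keylt (g, e) y then
            omap (fun r => (r.1.1, r.1.2, (r.2 + hcost h + hcost h1 + 3)%N))
                 (lazy_eval n' M ((g, e) :: h1))
          else Some ((g, e) :: h1, Some e, (hcost h + hcost h1 + 3)%N)
        | None => Some ((g, e) :: h1, Some e, (hcost h + hcost h1 + 3)%N)
        end
    end
  end.

Definition upd {T : Type} (F : V -> T) (v : V) (x : T) : V -> T :=
  fun w => if w == v then x else F w.

(* update step over the worklist us (matching M fixed);
   returns (heaps, pointers, vertices whose pointer changed, cost) *)
Fixpoint update_step (n : nat) (M : {set E}) (pq : V -> seq (R * E))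
  (ptr : V -> option E) (us : seq V)
  : option ((V -> seq (R * E)) * (V -> option E) * seq V * nat) :=
  match us with
  | [::] => Some (pq, ptr, [::], 0%N)
  | v :: us' =>
    if availv M v then
      match lazy_eval n M (pq v) with
      | None => None
      | Some (h', p, c) =>
        omap (fun r => let: (pq2, ptr2, cs, c2) := r in
                       (pq2, ptr2, (if p != ptr v then v :: cs else cs),
                        (c2 + c + 1)%N))
             (update_step n M (upd pq v h') (upd ptr v p) us')
      end
    else omap (fun r => let: (pq2, ptr2, cs, c2) := r in
                        (pq2, ptr2, cs, (c2 + 1)%N))
              (update_step n M pq ptr us')
  end.

(* matching step over the vertices whose pointer changed;
   returns (new matching, newly matched edges, cost) *)
Fixpoint match_step (ptr : V -> option E) (M : {set E}) (cs : seq V)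
  : {set E} * seq E * nat :=
  match cs with
  | [::] => (M, [::], 0%N)
  | u :: cs' =>
    let: (M1, nw) :=
      if availv M u then
        match ptr u with
        | Some e =>
          let v := other e u in
          if availv M v && (ptr v == Some e) then (e |: M, [:: e]) else (M, [::])
        | None => (M, [::])
        end
      else (M, [::]) in
    let: (M2, nw2, c) := match_step ptr M1 cs' in (M2, nw ++ nw2, (c + 3)%N)
  end.

(* next worklist: endpoints of newly matched edges and their available
   neighbours (restricted to available vertices), with scanning cost *)
Definition touched (M : {set E}) (nw : seq E) : seq V :=
  undup [seq w <- flatten [seq x :: [seq other e' x | e' <- enum (delta x)]
                          | x <- flatten [seq [:: src e; dst e] | e <- nw]]
        | availv M w].
Definition touched_cost (nw : seq E) : nat :=
  (\sum_(e <- nw) (#|delta (src e)| + #|delta (dst e)| + 2))%N.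

Fixpoint main_loop (n : nat) (M : {set E}) (pq : V -> seq (R * E))
  (ptr : V -> option E) (us : seq V) : option nat :=
  match n with
  | 0 => None
  | n'.+1 =>
    if [exists e, avail_edge M e] then
      match update_step n' M pq ptr us with
      | None => None
      | Some (pq', ptr', cs, c1) =>
        let: (M', nw, c2) := match_step ptr' M (undup cs) in
        omap (fun c => (c + 1 + c1 + c2 + touched_cost nw)%N)
             (main_loop n' M' pq' ptr' (touched M' nw))
      end
    else Some 0%N
  end.

Definition pq0 (v : V) : seq (R * E) := [seq (f [set e], e) | e <- enum (delta v)].
Definition ptr0 (v : V) : option E := None.
Definition us0 : seq V := [seq v <- enum V | (0 < #|delta v|)%N].
Definition init_cost : nat :=
  (\sum_(v : V) #|delta v| * (2 + trunc_log 2 #|delta v|) + size us0)%N.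

(* total cost of a run of Local Lazy Greedy with fuel n (None: fuel exhausted) *)
Definition llg_cost (n : nat) : option nat :=
  omap (fun c => (init_cost + c)%N) (main_loop n set0 pq0 ptr0 us0).

End LocalLazyGreedy.

(* Amortized analysis with a potential function.  A heap entry of an edge e
   whose key was computed against the matching A is charged
   probe_cost * (1 + 2 beta - |A :&: N(e)|), N(e) the edges sharing an endpoint
   with e.  By local dependence, a lazy probe that re-inserts e with a changed
   key has strictly enlarged A :&: N(e), and a discarded entry leaves the heap,
   so every probe is paid for by the heap it runs in.  Each worklist vertex
   carries a fixed charge, and the slack
   sum_v deg(v) (b(v) - deg_M(v)) + 2 |E :\: M| pays for the neighbourhood scans
   around newly matched edges, hence for the next worklist.  Every round matches
   an edge: stored keys only overestimate current gains (submodularity), so the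
   pointed-to available edge with the largest current key (ties broken by rank)
   is also on top of the heap at its other endpoint.  The initial potential is
   O(beta m log Delta). *)

From HB Require Import structures.
From mathcomp Require Import all_boot all_order all_algebra.
From mathcomp Require Import zify lra.
Import Order.TTheory GRing.Theory Num.Theory.
Local Open Scope ring_scope.
Set Implicit Arguments. Unset Strict Implicit. Unset Printing Implicit Defensive.

Lemma sum_nat_mul_eq (I : finType) (g : I -> nat) (x : I) :
  (\sum_i g i * (x == i) = g x)%N.
Proof.
rewrite (bigD1 x) //= eqxx muln1 big1 ?addn0 // => i /negbTE ix.
by rewrite eq_sym ix muln0.
Qed.

Lemma sum_seq_count (I : finType) (w : I -> nat) (s : seq I) :
  (\sum_(x <- s) w x = \sum_i count_mem i s * w i)%N.
Proof.
elim: s => [|x s IH]; first by rewrite big_nil big1 // => i _; rewrite mul0n.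
rewrite big_cons IH /=; under [RHS]eq_bigr => i _ do rewrite mulnDl.
rewrite big_split /= [X in (_ = X + _)%N](eq_bigr _ (fun i _ => mulnC _ _)).
by rewrite sum_nat_mul_eq.
Qed.

Lemma card_setI_subset (T : finType) (M M' D : {set T}) : M \subset M' ->
  #|M' :&: D| = (#|M :&: D| + #|(M' :\: M) :&: D|)%N.
Proof.
move=> sub; rewrite -(cardsID M (M' :&: D)); congr addn; apply: eq_card => x.
- by rewrite !inE andbC; case: (boolP (x \in M)) => // /(subsetP sub) ->.
- by rewrite !inE andbA.
Qed.

Section KeyOrder.
Variables (R : realFieldType) (E : finType) (rank : E -> nat).
Local Notation klt := (keylt rank).

Lemma keylt_irr (x : R * E) : ~~ klt x x.
Proof. by rewrite /keylt ltxx ltnn andbF. Qed.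

Lemma keylt_trans (x y z : R * E) : klt x y -> klt y z -> klt x z.
Proof.
rewrite /keylt; case: x y z => [x1 x2] [y1 y2] [z1 z2] /=.
case/orP=> [h1|/andP[/eqP e1 r1]]; case/orP=> [h2|/andP[/eqP e2 r2]].
- by rewrite (lt_trans h1 h2).
- by rewrite -e2 h1.
- by rewrite e1 h2.
- by rewrite e1 e2 eqxx (ltn_trans r1 r2) orbT.
Qed.

Lemma keylt_split (x y z : R * E) : klt x z -> klt x y || klt y z.
Proof.
rewrite /keylt; case: x y z => [x1 x2] [y1 y2] [z1 z2] /=.
case: (ltgtP x1 y1) => [//|h|<-] /=; case/orP=> [h2|/andP[/eqP e2 r2]].
- by rewrite (lt_trans h h2).
- by rewrite -e2 h.
- by rewrite h2 orbT.
- rewrite -e2 ltxx eqxx /=; case: ltnP => //= xy.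
  by rewrite (leq_ltn_trans xy r2).
Qed.

Lemma keylt_raise (x : R * E) (g k : R) (e : E) : klt x (g, e) -> g <= k -> klt x (k, e).
Proof.
rewrite /keylt /= => /orP[lt gk|/andP[/eqP-> r] gk]; first by rewrite (lt_le_trans lt gk).
rewrite le_eqVlt in gk; case/orP: gk => [/eqP<-|->//]; by rewrite eqxx r orbT.
Qed.

Lemma keylt_total (x y : R * E) : injective rank -> x.2 != y.2 -> klt x y || klt y x.
Proof.
move=> rank_inj ne; rewrite /keylt.
have rne : rank x.2 != rank y.2 by apply: contra ne => /eqP /rank_inj ->.
case: (ltgtP x.1 y.1) => //= _.
by case: ltngtP rne => // ->; rewrite eqxx.
Qed.

Lemma hmax_none (h : seq (R * E)) : hmax rank h = None -> h = [::].
Proof. by case: h => //= x t; case: (hmax rank t). Qed.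

Lemma hmax_mem (h : seq (R * E)) x : hmax rank h = Some x -> x \in h.
Proof.
elim: h x => //= y t IH x; case Ht: (hmax rank t) => [z|] [<-]; last exact: mem_head.
by case: ifP => _; rewrite in_cons ?eqxx ?(IH z Ht) ?orbT.
Qed.

Lemma hmax_maximal (h : seq (R * E)) x : hmax rank h = Some x ->
  forall y, y \in h -> ~~ klt x y.
Proof.
elim: h x => //= y t IH x; case Ht: (hmax rank t) => [z|] [<-] w; last first.
  by rewrite (hmax_none Ht) in_cons orbF => /eqP->; exact: keylt_irr.
have Hz := IH z Ht; case: ifP => hzy; rewrite in_cons => /orP[/eqP->|wt].
- exact: keylt_irr.
- by apply/negP => hyw; move: (Hz w wt); rewrite (keylt_trans hzy hyw).
- by rewrite hzy.
- exact: Hz.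
Qed.

Lemma not_below_hmax (h : seq (R * E)) x :
  (forall y, hmax rank h = Some y -> ~~ klt x y) -> forall z, z \in h -> ~~ klt x z.
Proof.
case Hy: (hmax rank h) => [y|] xy z; last by rewrite (hmax_none Hy).
move=> zh; apply/negP => /(keylt_split y)/orP[xy'|yz].
  by move: (xy y erefl); rewrite xy'.
by move: (hmax_maximal Hy zh); rewrite yz.
Qed.

End KeyOrder.

Section Graph.
Variables (V E : finType) (src dst : E -> V).
Local Notation δ := (delta src dst).
Local Notation other_end := (other src dst).

Lemma in_delta (e : E) (z : V) : (e \in δ z) = (src e == z) || (dst e == z).
Proof. by rewrite /delta inE. Qed.

Lemma delta_src (e : E) : e \in δ (src e).
Proof. by rewrite in_delta eqxx. Qed.

Lemma delta_dst (e : E) : e \in δ (dst e).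
Proof. by rewrite in_delta eqxx orbT. Qed.

Lemma other_cases (e : E) (u : V) : e \in δ u ->
  (src e = u /\ dst e = other_end e u) \/ (dst e = u /\ src e = other_end e u).
Proof.
rewrite in_delta /other; case: eqP => [|ne /= /eqP]; first by left.
by right.
Qed.

Lemma delta_other (e : E) (u : V) : e \in δ u -> e \in δ (other_end e u).
Proof. by case/other_cases => -[_ <-]; rewrite ?delta_src ?delta_dst. Qed.

Lemma delta_endpoints (e : E) (u z : V) :
  e \in δ u -> e \in δ z -> z = u \/ z = other_end e u.
Proof.
by case/other_cases=> -[su du]; rewrite in_delta su du => /orP[] /eqP <-; auto.
Qed.

Lemma nbr_edges_other (e : E) (u : V) :
  e \in δ u -> nbr_edges src dst e = δ u :|: δ (other_end e u).
Proof. by rewrite /nbr_edges; case/other_cases=> -[su du]; rewrite su du // setUC. Qed.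

Lemma card_delta_le_maxdeg (v : V) : (#|δ v| <= maxdeg src dst)%N.
Proof. exact: (@leq_bigmax _ (fun v => #|δ v|) v). Qed.

Lemma count_delta_le2 (e : E) (s : seq V) : uniq s -> (count (fun u => e \in δ u) s <= 2)%N.
Proof.
move=> us; rewrite -size_filter -[2%N]/(size [:: src e; dst e]).
apply: uniq_leq_size; first exact: filter_uniq.
by move=> u; rewrite mem_filter in_delta !inE => /andP[/orP[]/eqP-> _]; rewrite eqxx ?orbT.
Qed.

Hypothesis loopless : forall e, src e != dst e.

Lemma otherK (e : E) (u : V) : e \in δ u -> other_end e (other_end e u) = u.
Proof.
case/other_cases=> -[su du]; rewrite -du -su /other ?eqxx //.
by rewrite (negbTE (loopless e)).
Qed.

Lemma card_setI_delta (N : {set E}) (v : V) :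
  #|N :&: δ v| = (\sum_(e in N) ((src e == v) + (dst e == v)))%N.
Proof.
rewrite -sum1_card big_mkcond [RHS]big_mkcond /=; apply: eq_bigr => e _.
rewrite in_setI in_delta; case: (e \in N) => //=.
case: (eqVneq (src e) v) => [se|_]; case: (eqVneq (dst e) v) => [de|_] //=.
by have := loopless e; rewrite se de eqxx.
Qed.

Lemma sum_endpoints (g : V -> nat) (N : {set E}) :
  (\sum_(e in N) (g (src e) + g (dst e)) = \sum_v g v * #|N :&: δ v|)%N.
Proof.
under [RHS]eq_bigr => v _ do rewrite card_setI_delta big_distrr /=.
rewrite exchange_big /=; apply: eq_bigr => e _.
under eq_bigr => v _ do rewrite mulnDr.
by rewrite big_split /= !sum_nat_mul_eq.
Qed.

Lemma sum_card_delta : (\sum_v #|δ v| = 2 * #|E|)%N.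
Proof.
have := sum_endpoints (fun _ => 1%N) setT; rewrite sum_nat_const cardsT mulnC => ->.
by apply: eq_bigr => v _; rewrite mul1n setTI.
Qed.

End Graph.

Arguments in_delta {V E src dst} e z.
Arguments delta_src {V E src dst} e.
Arguments delta_dst {V E src dst} e.

Section BMatching.
Variables (V E : finType) (src dst : E -> V) (b : V -> nat).
Local Notation δ := (delta src dst).
Local Notation availV := (availv src dst b).
Local Notation availE := (avail_edge src dst b).
Local Notation other_end := (other src dst).

Definition is_bmatching (M : {set E}) : Prop := forall v, (#|M :&: δ v| <= b v)%N.

Lemma b_le_beta (v : V) : (b v <= beta b)%N.
Proof. exact: (@leq_bigmax _ b v). Qed.

Lemma card_nbr_le (M : {set E}) (e : E) :
  is_bmatching M -> (#|M :&: nbr_edges src dst e| <= 2 * beta b)%N.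
Proof.
move=> HM; rewrite /nbr_edges setIUr; apply: leq_trans (leq_card_setU _ _) _.
have := HM (src e); have := HM (dst e).
by have := b_le_beta (src e); have := b_le_beta (dst e); lia.
Qed.

Lemma availv_anti (M M' : {set E}) (v : V) :
  M \subset M' -> is_bmatching M' -> availV M' v -> availV M v.
Proof.
rewrite /availv /saturated => sub HM'; have := HM' v.
have := subset_leq_card (setSI (δ v) sub); lia.
Qed.

Lemma avail_edge_anti (M M' : {set E}) (e : E) :
  M \subset M' -> is_bmatching M' -> availE M' e -> availE M e.
Proof.
move=> sub HM /and3P[eM a1 a2]; apply/and3P; split.
- by apply: contra eM; apply: (subsetP sub).
- exact: availv_anti a1.
- exact: availv_anti a2.
Qed.

Lemma availv_unchanged (M M' : {set E}) (v : V) : M \subset M' ->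
  (M' :\: M) :&: δ v = set0 -> availV M' v = availV M v.
Proof.
by move=> sub new0; rewrite /availv /saturated (card_setI_subset _ sub) new0 cards0 addn0.
Qed.

Lemma availv_endpoint (M : {set E}) (e : E) (v : V) :
  availE M e -> e \in δ v -> availV M v.
Proof. by case/and3P=> _ ??; rewrite in_delta => /orP[] /eqP <-. Qed.

Lemma bmatching_setU1 (M : {set E}) (e : E) (u : V) : is_bmatching M -> e \in δ u ->
  availV M u -> availV M (other_end e u) -> is_bmatching (e |: M).
Proof.
move=> HM eu au ao z; rewrite setIUl; have := HM z.
case ez: (e \in δ z); last first.
  have -> : [set e] :&: δ z = set0.
    by apply/setP => x; rewrite in_setI in_set1 in_set0; case: eqP => // ->; rewrite ez.
  by rewrite set0U.
have -> : [set e] :&: δ z = [set e] by apply/setIidPl; rewrite sub1set.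
have az : availV M z by case: (delta_endpoints eu ez) => ->.
move: az; rewrite /availv /saturated cardsU1.
by move: #|M :&: δ z| (b z) (e \notin _) => x y [] /=; lia.
Qed.

Definition match_vertex (ptr : V -> option E) (M : {set E}) (u : V) : {set E} * seq E :=
  if availV M u then
    if ptr u is Some e then
      if availV M (other_end e u) && (ptr (other_end e u) == Some e)
      then (e |: M, [:: e]) else (M, [::])
    else (M, [::])
  else (M, [::]).

Lemma match_step_cons (ptr : V -> option E) (M : {set E}) (u : V) (cs : seq V) :
  match_step src dst b ptr M (u :: cs) =
  let: (M1, nw) := match_vertex ptr M u in
  let: (M2, nw2, c) := match_step src dst b ptr M1 cs in (M2, nw ++ nw2, (c + 3)%N).
Proof. by []. Qed.

Definition pointers_avail (Mb : {set E}) (ptr : V -> option E) : Prop :=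
  forall u e, availV Mb u -> ptr u = Some e -> availE Mb e /\ e \in δ u.

Lemma match_vertex_ok (ptr : V -> option E) (Mb M : {set E}) (u : V)
    (M1 : {set E}) (nw : seq E) :
  Mb \subset M -> is_bmatching M -> pointers_avail Mb ptr ->
  match_vertex ptr M u = (M1, nw) ->
  [/\ M \subset M1, is_bmatching M1,
      (forall e, (e \in M1) = (e \in M) || (e \in nw)),
      (forall e, e \in nw -> e \notin Mb) /\ (forall e, count_mem e nw <= (e \in δ u))%N &
      (forall e, ptr u = Some e -> ptr (other_end e u) = Some e -> availV M u ->
         availV M (other_end e u) -> e \in M1)].
Proof.
move=> sub HM Hp; rewrite /match_vertex.
case au: (availV M u); last first.
  by case=> <- <-; split=> // e; rewrite orbF.
case pu: (ptr u) => [e|]; last by case=> <- <-; split=> // e; rewrite orbF.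
have [ae eu] := Hp u e (availv_anti sub HM au) pu.
case: ifP => [/andP[ao /eqP po]|nmut]; last first.
  case=> <- <-; split=> // [e'|e' [<-] po' _ ao']; first by rewrite orbF.
  by rewrite ao' po' eqxx in nmut.
case=> <- <-; split.
- exact: subsetUr.
- exact: bmatching_setU1 HM eu au ao.
- by move=> e'; rewrite in_setU1 mem_seq1 orbC.
- split=> [e'|e' /=]; first by rewrite mem_seq1 => /eqP->; case/and3P: ae.
  by rewrite addn0; case: eqP => [<-|]; rewrite ?eu.
- by move=> e' [<-] _ _ _; exact: setU11.
Qed.

Lemma match_step_ok (ptr : V -> option E) (Mb : {set E}) (cs : seq V)
    (M M' : {set E}) (nw : seq E) (c : nat) :
  Mb \subset M -> is_bmatching M -> pointers_avail Mb ptr ->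
  match_step src dst b ptr M cs = (M', nw, c) ->
  [/\ c = (3 * size cs)%N, M \subset M' /\ is_bmatching M',
      (forall e, (e \in M') = (e \in M) || (e \in nw)),
      (forall e, e \in nw -> e \notin Mb) /\
        (forall e, count_mem e nw <= count (fun u => e \in δ u) cs)%N &
      (forall u e, u \in cs -> ptr u = Some e -> ptr (other_end e u) = Some e ->
         availV M' u -> availV M' (other_end e u) -> e \in M')].
Proof.
elim: cs M M' nw c => [|u cs IH] M M' nw c sub HM Hp.
  by case=> <- <- <-; split=> // e; rewrite orbF.
rewrite match_step_cons.
case E1: (match_vertex ptr M u) => [M1 nw1].
case E2: (match_step src dst b ptr M1 cs) => [[M2 nw2] c2] [<- <- <-].
have [sub01 HM1 mem1 [old1 cnt1] mut1] := match_vertex_ok sub HM Hp E1.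
have [-> [sub12 HM2] mem2 [old2 cnt2] mut2] := IH M1 M2 nw2 c2 (subset_trans sub sub01) HM1 Hp E2.
have sub02 := subset_trans sub01 sub12.
split=> //.
- by rewrite /= mulnS addnC.
- by move=> e; rewrite mem2 mem1 mem_cat orbA.
- split=> [e|e]; first by rewrite mem_cat => /orP[/old1|/old2].
  by rewrite count_cat /=; exact: leq_add (cnt1 e) (cnt2 e).
- move=> w e; rewrite in_cons => /orP[/eqP->|wcs] pw po aw ao; last first.
    exact: (mut2 w e wcs pw po aw ao).
  have aw1 := availv_anti sub02 HM2 aw; have ao1 := availv_anti sub02 HM2 ao.
  exact: (subsetP sub12) _ (mut1 _ pw po aw1 ao1).
Qed.

Lemma size_touched_scan (nw : seq E) :
  size (flatten [seq x :: [seq other_end e' x | e' <- enum (δ x)]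
         | x <- flatten [seq [:: src e; dst e] | e <- nw]]) = touched_cost src dst nw.
Proof.
elim: nw => [|e nw IH]; first by rewrite /touched_cost big_nil.
rewrite /touched_cost big_cons -/(touched_cost src dst nw) -IH /=.
rewrite !size_cat /= !size_cat !size_map -!cardE.
by move: (size _) #|δ (src e)| #|δ (dst e)| => *; lia.
Qed.

Lemma size_touched (M : {set E}) (nw : seq E) :
  (size (touched src dst b M nw) <= touched_cost src dst nw)%N.
Proof.
rewrite /touched -size_touched_scan; apply: leq_trans (size_undup _) _.
by rewrite size_filter count_size.
Qed.

Lemma mem_touched (M : {set E}) (nw : seq E) (e : E) (z x : V) : e \in nw -> e \in δ z ->
  (x = z \/ exists2 e', e' \in δ z & x = other_end e' z) -> availV M x ->
  x \in touched src dst b M nw.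
Proof.
move=> en ez hx ax; rewrite /touched mem_undup mem_filter ax /=.
apply/flatten_mapP; exists z.
  by apply/flatten_mapP; exists e => //; move: ez; rewrite in_delta !inE ![_ == z]eq_sym.
case: hx => [->|[e' e'z ->]]; first exact: mem_head.
by rewrite in_cons (map_f (other_end^~ z)) ?orbT ?mem_enum.
Qed.

Definition no_mutual (M : {set E}) (ptr : V -> option E) : Prop :=
  forall e, availE M e -> ~ (ptr (src e) = Some e /\ ptr (dst e) = Some e).

Definition scan_cost (e : E) : nat := (#|δ (src e)| + #|δ (dst e)| + 2)%N.

Definition slack (M : {set E}) : nat :=
  (\sum_v #|δ v| * (b v - #|M :&: δ v|) + 2 * #|~: M|)%N.

Lemma touched_cost_le (M M' : {set E}) (nw : seq E) (cs : seq V) : uniq cs ->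
  (forall e, count_mem e nw <= count (fun u => e \in δ u) cs)%N ->
  (forall e, e \in nw -> e \in M' :\: M) ->
  (touched_cost src dst nw <= 2 * \sum_(e in M' :\: M) scan_cost e)%N.
Proof.
move=> ucs cnt sub; rewrite /touched_cost sum_seq_count big_distrr /=.
rewrite [X in (_ <= X)%N]big_mkcond /=; apply: leq_sum => e _.
case: ifP => eN.
  by rewrite -/(scan_cost e) leq_mul2r (leq_trans (cnt e)) ?count_delta_le2 ?orbT.
have /count_memPn -> : e \notin nw by apply: contraFN eN => /sub.
by rewrite mul0n.
Qed.

Hypothesis loopless : forall e, src e != dst e.

Lemma touched_far (M : {set E}) (nw : seq E) (x : V) (e : E) :
  availV M x -> x \notin touched src dst b M nw -> e \in nw ->
  e \notin δ x /\ forall e', e' \in δ x -> e \notin δ (other_end e' x).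
Proof.
move=> ax far en; split; first by apply: contra far => ex; apply: mem_touched en ex _ ax; left.
move=> e' e'x; apply: contra far => ey; apply: mem_touched en ey _ ax; right.
by exists e'; rewrite ?delta_other ?otherK.
Qed.

Lemma no_mutual_after_match (M M' : {set E}) (ptr ptr' : V -> option E) (cs : seq V) :
  M \subset M' -> is_bmatching M' -> (forall v, v \notin cs -> ptr' v = ptr v) ->
  (forall u e, u \in cs -> ptr' u = Some e -> ptr' (other_end e u) = Some e ->
     availV M' u -> availV M' (other_end e u) -> e \in M') ->
  no_mutual M ptr -> no_mutual M' ptr'.
Proof.
move=> sub HM' frame mut none e ae [ps pd]; case/and3P: (ae) => eM' a1 a2.
have osd : other_end e (src e) = dst e by rewrite /other eqxx.
have ods : other_end e (dst e) = src e by rewrite /other (negbTE (loopless e)).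
case: (boolP (src e \in cs)) => [sc|/frame sc].
  by have := mut _ _ sc ps; rewrite osd => /(_ pd a1 a2); rewrite (negbTE eM').
case: (boolP (dst e \in cs)) => [dc|/frame dc].
  by have := mut _ _ dc pd; rewrite ods => /(_ ps a2 a1); rewrite (negbTE eM').
by apply: (none e (avail_edge_anti sub HM' ae)); rewrite -sc -dc.
Qed.

Lemma slack_split (M M' : {set E}) : M \subset M' -> is_bmatching M' ->
  slack M = (slack M' + \sum_(e in M' :\: M) scan_cost e)%N.
Proof.
move=> sub HM'; rewrite /slack.
have Mc : #|~: M| = (#|~: M'| + #|M' :\: M|)%N.
  have := cardsC M; have := cardsC M'; have := cardsID M M'; rewrite (setIidPr sub).
  by move: #|M| #|~: M| #|M'| #|~: M'| #|M' :\: M| #|E| => *; lia.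
have Ms : (\sum_v #|δ v| * (b v - #|M :&: δ v|) =
    \sum_v #|δ v| * (b v - #|M' :&: δ v|) + \sum_v #|δ v| * #|(M' :\: M) :&: δ v|)%N.
  rewrite -big_split /=; apply: eq_bigr => v _; rewrite -mulnDr; congr (_ * _)%N.
  have := HM' v; rewrite (card_setI_subset _ sub).
  by move: #|M :&: δ v| #|(M' :\: M) :&: δ v| (b v) => *; lia.
rewrite Ms Mc -(sum_endpoints loopless (fun v => #|δ v|)) /scan_cost.
rewrite !big_split /= sum_nat_const.
move: (\sum_v _)%N (\sum_(e in M' :\: M) #|δ (src e)|)%N (\sum_(e in M' :\: M) #|δ (dst e)|)%N.
by move=> *; lia.
Qed.

End BMatching.

Section LocalLazyGreedy.
Variables (R : realFieldType) (V E : finType) (src dst : E -> V).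
Variables (b : V -> nat) (f : {set E} -> R) (rank : E -> nat).
Local Notation δ := (delta src dst).
Local Notation N := (nbr_edges src dst).
Local Notation availV := (availv src dst b).
Local Notation availE := (avail_edge src dst b).
Local Notation klt := (keylt rank).
Local Notation other_end := (other src dst).
Local Notation ρ := (rho f).

Hypothesis loopless : forall e, src e != dst e.
Hypothesis rank_inj : injective rank.
Hypothesis f_normalized : normalized f.
Hypothesis f_submodular : submodular f.
Hypothesis f_local : local_dependence src dst f.

Lemma rho_antimono (A M : {set E}) (e : E) : A \subset M -> e \notin M -> ρ M e <= ρ A e.
Proof.
move=> sub eM; have := f_submodular (e |: A) M.
have -> : (e |: A) :|: M = e |: M.
  by rewrite -setUA; congr (_ :|: _); apply/setUidPr.
have -> : (e |: A) :&: M = A.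
  rewrite setIUl (setIidPl sub); apply/setUidPr; apply/subsetP => x.
  by rewrite !inE => /andP[/eqP-> eM']; rewrite eM' in eM.
rewrite /rho; lra.
Qed.

Lemma rho_unchanged (M M' : {set E}) (e : E) : M \subset M' ->
  (M' :\: M) :&: N e = set0 -> ρ M' e = ρ M e.
Proof.
move=> sub new0; rewrite f_local [RHS]f_local; congr (ρ _ e).
apply/setP => x; rewrite !in_setI; case xN: (x \in N e); rewrite ?andbF //= !andbT.
case xM: (x \in M); first by rewrite (subsetP sub).
by apply/negP => xM'; move/setP/(_ x): new0; rewrite in_set0 in_setI in_setD xM xN xM'.
Qed.

Definition log_maxdeg : nat := (trunc_log 2 (maxdeg src dst)).+1.
(* A lazy probe costs at most two heap operations plus three constant steps. *)
Definition probe_cost : nat := (2 * log_maxdeg + 3)%N.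

(* [stamp e] is the matching against which the key of [e] was last computed. *)
Definition heap_inv (M : {set E}) (v : V) (h : seq (R * E)) (stamp : E -> {set E}) :=
  [/\ uniq (map snd h),
      forall x, x \in h -> [/\ x.2 \in δ v, x.1 = ρ (stamp x.2) x.2 & stamp x.2 \subset M]
    & forall e, e \in δ v -> availE M e -> e \in map snd h].

Definition pointer_ok (M : {set E}) (v : V) (h : seq (R * E)) (p : option E) :=
  match p with
  | None => forall e, e \in δ v -> ~~ availE M e
  | Some e => [/\ availE M e, (ρ M e, e) \in h & forall y, y \in h -> ~~ klt (ρ M e, e) y]
  end.

(* By local dependence a recomputed key differs from the stored one only if
   [stamp e :&: N e] has grown, which can happen at most [2 * beta b] times. *)
Definition entry_charge (stamp : E -> {set E}) (x : R * E) : nat :=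
  (probe_cost * (1 + (2 * beta b - #|stamp x.2 :&: N x.2|)))%N.

Definition heap_charge (h : seq (R * E)) (stamp : E -> {set E}) : nat :=
  (\sum_(x <- h) entry_charge stamp x)%N.

Definition restamp (stamp : E -> {set E}) (e0 : E) (M : {set E}) : E -> {set E} :=
  fun e => if e == e0 then M else stamp e.

Lemma probe_cost_gt0 : (0 < probe_cost)%N.
Proof. by rewrite /probe_cost addn3. Qed.

Lemma probe_cost_le_charge stamp x : (probe_cost <= entry_charge stamp x)%N.
Proof. by rewrite /entry_charge leq_pmulr. Qed.

Lemma heap_size_le M v h stamp : heap_inv M v h stamp -> (size h <= maxdeg src dst)%N.
Proof.
case=> uh hmem _; rewrite -(size_map snd) -(card_uniqP uh).
apply: leq_trans (card_delta_le_maxdeg src dst v); apply: subset_leq_card.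
by apply/subsetP => e /mapP[x /hmem[]] ? _ _ ->.
Qed.

Lemma hcost_le_log (h : seq (R * E)) :
  (size h <= maxdeg src dst)%N -> (hcost h <= log_maxdeg)%N.
Proof. by move=> hs; rewrite /hcost /log_maxdeg ltnS leq_trunc_log. Qed.

Lemma heap_charge_rem h stamp x : x \in h ->
  heap_charge h stamp = (entry_charge stamp x + heap_charge (rem x h) stamp)%N.
Proof. by move=> xh; rewrite /heap_charge (perm_big _ (perm_to_rem xh)) big_cons. Qed.

Lemma heap_inv_rem M v h stamp x : heap_inv M v h stamp -> x \in h -> ~~ availE M x.2 ->
  heap_inv M v (rem x h) stamp.
Proof.
case=> uh hmem hall xh nav; have Pm := perm_map snd (perm_to_rem xh).
split.
- by move: uh; rewrite (perm_uniq Pm) /= => /andP[].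
- by move=> y /mem_rem /hmem.
- move=> e ev ae; move: (hall e ev ae); rewrite (perm_mem Pm) in_cons.
  by case/orP=> [/eqP ee|//]; move: nav; rewrite -ee ae.
Qed.

Lemma heap_inv_refresh M v h stamp x : is_bmatching src dst b M ->
  heap_inv M v h stamp -> x \in h ->
  let x' := (ρ M x.2, x.2) in let stamp' := restamp stamp x.2 M in
  [/\ heap_inv M v (x' :: rem x h) stamp',
      (heap_charge (x' :: rem x h) stamp' <= heap_charge h stamp)%N &
      (x' != x -> (heap_charge (x' :: rem x h) stamp' + probe_cost <= heap_charge h stamp)%N)].
Proof.
move=> HM [uh hmem hall] xh x' stamp'; have Pm := perm_map snd (perm_to_rem xh).
have [xv xkey xsub] := hmem x xh.
have fresh y : y \in rem x h -> (y.2 == x.2) = false.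
  move=> yr; apply/negP => /eqP ye; move: uh; rewrite (perm_uniq Pm) /= => /andP[+ _].
  by rewrite -ye (map_f snd yr).
have charge_rest : heap_charge (rem x h) stamp' = heap_charge (rem x h) stamp.
  by apply: eq_big_seq => y yr; rewrite /entry_charge /stamp' /restamp fresh.
have charge_new : heap_charge (x' :: rem x h) stamp' =
    (probe_cost * (1 + (2 * beta b - #|M :&: N x.2|)) + heap_charge (rem x h) stamp)%N.
  rewrite /heap_charge big_cons -/(heap_charge _ _) charge_rest.
  by rewrite /entry_charge /stamp' /restamp eqxx.
have sub : stamp x.2 :&: N x.2 \subset M :&: N x.2 by apply: setSI.
have Mle := card_nbr_le x.2 HM.
rewrite charge_new (heap_charge_rem stamp xh) /entry_charge; split.
- split.
  + by move: uh; rewrite (perm_uniq Pm).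
  + move=> y; rewrite in_cons => /orP[/eqP->|yr]; first by rewrite /stamp' /restamp eqxx.
    by have [? ? ?] := hmem y (mem_rem yr); rewrite /stamp' /restamp fresh.
  + by move=> e ev ae; rewrite -(perm_mem Pm) hall.
- by rewrite leq_add2r leq_mul2l leq_add2l leq_sub2l ?subset_leq_card ?orbT.
- move=> ne; rewrite addnAC leq_add2r -mulnSr leq_mul2l; apply/orP; right.
  have : stamp x.2 :&: N x.2 \proper M :&: N x.2.
    rewrite properEneq sub andbT; apply: contra ne => /eqP same.
    by rewrite /x'; case: (x) xkey same => x1 x2 /= -> same; rewrite f_local -same -f_local.
  by move/proper_card; move: Mle; move: #|M :&: _| #|stamp _ :&: _| => p q; lia.
Qed.

Lemma pointer_ok_head M v e h : availE M e ->
  (forall y, y \in h -> ~~ klt (ρ M e, e) y) -> pointer_ok M v ((ρ M e, e) :: h) (Some e).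
Proof.
move=> ae top; split=> //; first exact: mem_head.
by move=> y; rewrite in_cons => /orP[/eqP->|/top//]; exact: keylt_irr.
Qed.

Lemma lazy_eval_ok n M v h stamp : is_bmatching src dst b M -> heap_inv M v h stamp ->
  (heap_charge h stamp < n)%N ->
  exists h' p c stamp', lazy_eval src dst b f rank n M h = Some (h', p, c) /\
    [/\ heap_inv M v h' stamp', pointer_ok M v h' p &
        (c + heap_charge h' stamp' <= heap_charge h stamp + probe_cost)%N].
Proof.
move=> HM; elim: n h stamp => // n IH h stamp hinv fuel /=.
case Hx: (hmax rank h) => [x|]; last first.
  move: hinv; rewrite (hmax_none Hx) => -[_ _ hall].
  exists [::], None, 1%N, stamp; split=> //; split=> //.
  - by move=> e ev; apply/negP => /(hall e ev).
  - by rewrite /heap_charge big_nil probe_cost_gt0.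
have xh := hmax_mem Hx.
have hc : (hcost h <= log_maxdeg)%N := hcost_le_log (heap_size_le hinv).
have hc' : (hcost (rem x h) <= log_maxdeg)%N.
  by apply: hcost_le_log; rewrite size_rem // (leq_trans (leq_pred _) (heap_size_le hinv)).
have charge_x := probe_cost_le_charge stamp x.
have charge_h := heap_charge_rem stamp xh.
have probe_pos := probe_cost_gt0.
case: ifP => [nav|/negbFE av].
  have fuel' : (heap_charge (rem x h) stamp < n)%N by lia.
  have [h' [p [c [st' [-> [inv' ptr' cost']]]]]] := IH _ stamp (heap_inv_rem hinv xh nav) fuel'.
  exists h', p, (c + hcost h + 1)%N, st'; split=> //; split=> //.
  by rewrite /probe_cost in cost' charge_x *; lia.
have [inv' le' lt'] := heap_inv_refresh HM hinv xh.
set x' := (ρ M x.2, x.2) in inv' le' lt' *.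
have stop : (forall y, hmax rank (rem x h) = Some y -> ~~ klt x' y) ->
    exists h' p c stamp', Some (x' :: rem x h, Some x.2, (hcost h + hcost (rem x h) + 3)%N)
      = Some (h', p, c) /\
    [/\ heap_inv M v h' stamp', pointer_ok M v h' p &
        (c + heap_charge h' stamp' <= heap_charge h stamp + probe_cost)%N].
  move=> top; exists (x' :: rem x h), (Some x.2), (hcost h + hcost (rem x h) + 3)%N.
  exists (restamp stamp x.2 M); split=> //; split=> //.
  - exact/pointer_ok_head/not_below_hmax.
  - rewrite /probe_cost; move: le' hc hc'.
    by move: (hcost (rem x h)) (heap_charge (x' :: _) _) => *; lia.
case Hy: (hmax rank (rem x h)) => [y|]; last by apply: stop; rewrite Hy.
case: ifP => [below|top]; last by apply: stop => y'; rewrite Hy => -[<-]; rewrite top.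
have ne : x' != x.
  by apply: contraTneq below => ->; exact: hmax_maximal Hx _ (mem_rem (hmax_mem Hy)).
have fuel' : (heap_charge (x' :: rem x h) (restamp stamp x.2 M) < n)%N.
  by have := lt' ne; move: (heap_charge (x' :: _) _) => *; lia.
have [h' [p [c [st' [-> [inv'' ptr' cost']]]]]] := IH _ _ inv' fuel'.
exists h', p, (c + hcost h + hcost (rem x h) + 3)%N, st'; split=> //; split=> //.
have := lt' ne; move: cost' hc hc'; rewrite /probe_cost.
by move: (hcost (rem x h)) (heap_charge (x' :: _) _) => *; lia.
Qed.

Definition total_charge (pq : V -> seq (R * E)) (stamp : V -> E -> {set E}) : nat :=
  (\sum_v heap_charge (pq v) (stamp v))%N.

Lemma heap_charge_le_total pq stamp v :
  (heap_charge (pq v) (stamp v) <= total_charge pq stamp)%N.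
Proof. by rewrite /total_charge (bigD1 v) //= leq_addr. Qed.

Lemma total_charge_upd pq stamp v h st :
  (total_charge (upd pq v h) (upd stamp v st) + heap_charge (pq v) (stamp v) =
   total_charge pq stamp + heap_charge h st)%N.
Proof.
rewrite /total_charge (bigD1 v) //= [in RHS](bigD1 v) //= /upd eqxx.
rewrite (eq_bigr (fun w => heap_charge (pq w) (stamp w))) => [|w /negbTE-> //].
lia.
Qed.

Lemma update_step_frame n M pq ptr us pq' ptr' cs c :
  update_step src dst b f rank n M pq ptr us = Some (pq', ptr', cs, c) ->
  [/\ forall v, (v \notin us) || ~~ availV M v -> pq' v = pq v /\ ptr' v = ptr v,
      forall v, v \notin cs -> ptr' v = ptr v & (size cs <= size us)%N].
Proof.
elim: us pq ptr pq' ptr' cs c => [|u us IH] pq ptr pq' ptr' cs c /=; first by case=> <- <- <-.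
have notin_tail v : (v \notin u :: us) || ~~ availV M v -> (v \notin us) || ~~ availV M v.
  by rewrite in_cons negb_or => /orP[/andP[_ ->]|->]; rewrite ?orbT.
case au: (availV M u); last first.
  case E1: update_step => [[[[pq2 ptr2] cs2] c2]|] //= [<- <- <- _].
  have [fr1 fr2 sz] := IH _ _ _ _ _ _ E1.
  by split=> // [v /notin_tail/fr1 //|]; apply: leq_trans sz _.
case: lazy_eval => [[[h' p] c0]|] //.
case E1: update_step => [[[[pq2 ptr2] cs2] c2]|] //= [<- <- <- _].
have [fr1 fr2 sz] := IH _ _ _ _ _ _ E1; split.
- move=> v out; have vu : v != u.
    by apply: contraTneq out => ->; rewrite au mem_head.
  by have [-> ->] := fr1 v (notin_tail v out); rewrite /upd (negbTE vu).
- move=> v; case: (eqVneq v u) => [->|vu].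
  + case: ifP => [_|/negbFE/eqP pu]; first by rewrite mem_head.
    by move=> /fr2->; rewrite /upd eqxx.
  + by case: ifP => _; rewrite ?in_cons ?(negbTE vu) /= => /fr2->; rewrite /upd (negbTE vu).
- by case: ifP => _ /=; [rewrite ltnS | apply: leq_trans (leqnSn _)].
Qed.

Lemma update_step_ok n M us pq ptr stamp : is_bmatching src dst b M -> uniq us ->
  (forall v, heap_inv M v (pq v) (stamp v)) ->
  (forall v, v \in us -> heap_charge (pq v) (stamp v) < n)%N ->
  exists pq' ptr' cs c stamp',
    update_step src dst b f rank n M pq ptr us = Some (pq', ptr', cs, c) /\
    [/\ forall v, heap_inv M v (pq' v) (stamp' v),
        forall v, v \in us -> availV M v -> pointer_ok M v (pq' v) (ptr' v) &
        (c + total_charge pq' stamp' <= total_charge pq stamp + (probe_cost + 1) * size us)%N].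
Proof.
move=> HM; elim: us pq ptr stamp => [|u us IH] pq ptr stamp /=.
  move=> _ hinv _; exists pq, ptr, [::], 0%N, stamp.
  by split=> //; split=> //; rewrite muln0 addn0.
case/andP=> uus uniq_us hinv fuel.
have fuel_us v : v \in us -> (heap_charge (pq v) (stamp v) < n)%N.
  by move=> vus; apply: fuel; rewrite in_cons vus orbT.
case au: (availV M u); last first.
  have [pq' [ptr' [cs [c [st' [-> [inv' ok' cost']]]]]]] := IH pq ptr stamp uniq_us hinv fuel_us.
  exists pq', ptr', cs, (c + 1)%N, st'; split=> //; split=> //.
  + by move=> v; rewrite in_cons => /orP[/eqP->|/ok' //]; rewrite au.
  + by move: cost'; rewrite mulnS; move: ((probe_cost + 1) * _)%N => *; lia.
have [h' [p [c0 [st0 [-> [inv0 ok0 cost0]]]]]] := lazy_eval_ok HM (hinv u) (fuel u (mem_head _ _)).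
have hinv1 v : heap_inv M v (upd pq u h' v) (upd stamp u st0 v).
  by rewrite /upd; case: eqP => // ->.
have fuel1 v : v \in us -> (heap_charge (upd pq u h' v) (upd stamp u st0 v) < n)%N.
  by move=> vus; rewrite /upd; case: eqP => [ev|_]; [move: uus; rewrite -ev vus | exact: fuel_us].
have [pq' [ptr' [cs [c [st' [E1 [inv' ok' cost']]]]]]] := IH _ (upd ptr u p) _ uniq_us hinv1 fuel1.
exists pq', ptr', (if p != ptr u then u :: cs else cs), (c + c0 + 1)%N, st'.
rewrite E1; split=> //; split=> //.
- move=> v; rewrite in_cons => /orP[/eqP->|/ok' //] _.
  have [frame _ _] := update_step_frame E1.
  have [-> ->] : pq' u = upd pq u h' u /\ ptr' u = upd ptr u p u by apply: frame; rewrite uus.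
  by rewrite /upd eqxx.
- have := total_charge_upd pq stamp u h' st0; move: cost' cost0; rewrite mulnS.
  by move: ((probe_cost + 1) * _)%N => *; lia.
Qed.

Lemma pointer_ok_untouched (M M' : {set E}) (nw : seq E) (x : V) h (p : option E) :
  M \subset M' -> is_bmatching src dst b M' ->
  (forall e, e \in M' -> e \notin M -> e \in nw) ->
  availV M' x -> x \notin touched src dst b M' nw ->
  (forall e, p = Some e -> e \in δ x) ->
  pointer_ok M x h p -> pointer_ok M' x h p.
Proof.
move=> sub HM' new ax far inc.
have quiet z : (z = x \/ exists2 e', e' \in δ x & z = other_end e' x) ->
    (M' :\: M) :&: δ z = set0.
  move=> hz; apply/setP => e; rewrite in_set0 in_setI in_setD.
  apply/negP => /andP[/andP[eM eM'] ez].
  have [nx ny] := touched_far loopless ax far (new e eM' eM).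
  by case: hz => [zx|[e' e'x zy]]; [move: nx | move: (ny e' e'x)]; rewrite -?zx -?zy ez.
case: p inc => [e|] inc; last first.
  by move=> none e ex; apply: contraNN (none e ex); apply: avail_edge_anti.
case=> ae eh top; have ex := inc e erefl.
have quiet_end z : e \in δ z -> (M' :\: M) :&: δ z = set0.
  by move=> ez; apply: quiet; case: (delta_endpoints ex ez); [left | right; exists e].
have rho_eq : ρ M' e = ρ M e.
  apply: rho_unchanged sub _.
  by rewrite (nbr_edges_other ex) setIUr quiet_end ?quiet_end ?delta_other // setU0.
have ae' : availE M' e.
  case/and3P: (ae) => eM _ _; apply/and3P; split.
  - apply/negP => eM'; move/setP/(_ e): (quiet_end _ ex).
    by rewrite in_setI in_setD in_set0 eM eM' ex.
  - rewrite (availv_unchanged b sub (quiet_end _ (delta_src e))).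
    exact: availv_endpoint ae (delta_src e).
  - rewrite (availv_unchanged b sub (quiet_end _ (delta_dst e))).
    exact: availv_endpoint ae (delta_dst e).
by split=> //; rewrite rho_eq.
Qed.

Lemma pointer_agrees M w h stamp (es e' : E) :
  heap_inv M w h stamp -> pointer_ok M w h (Some e') -> es \in δ w -> availE M es ->
  ~~ klt (ρ M es, es) (ρ M e', e') -> e' = es.
Proof.
move=> [_ hmem hall] [_ _ top] esw aes notbelow; apply/eqP/negPn/negP => ne.
have /mapP[y yh yes] := hall es esw aes.
have [_ ykey ysub] := hmem y yh.
have le_key : ρ M es <= y.1.
  by rewrite ykey -yes; apply: rho_antimono; [rewrite yes | case/and3P: aes].
have lt : klt (ρ M e', e') (ρ M es, es).
  move: (keylt_total (x := (ρ M e', e')) (y := (ρ M es, es)) rank_inj ne).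
  by rewrite (negbTE notbelow) orbF.
by move: (top y yh); rewrite [y]surjective_pairing -yes (keylt_raise lt le_key).
Qed.

Lemma exists_mutual_pointer M pq ptr stamp :
  (forall v, heap_inv M v (pq v) (stamp v)) ->
  (forall v, availV M v -> pointer_ok M v (pq v) (ptr v)) -> (exists e, availE M e) ->
  exists e, [/\ availE M e, ptr (src e) = Some e & ptr (dst e) = Some e].
Proof.
move=> hinv ok [e0 ae0].
have has_ptr v e : e \in δ v -> availE M e -> exists e', ptr v = Some e'.
  move=> ev ae; have := ok v (availv_endpoint ae ev).
  by case: (ptr v) => [e'|]; [exists e' | move/(_ e ev); rewrite ae].
(* The best pointed-to edge is the best available edge at both of its endpoints. *)
pose P := [seq (ρ M e, e) | e <- enum E & [exists v, availV M v && (ptr v == Some e)]].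
have inP v e : availV M v -> ptr v = Some e -> (ρ M e, e) \in P.
  move=> av pv; apply: map_f; rewrite mem_filter mem_enum andbT.
  by apply/existsP; exists v; rewrite av pv eqxx.
have [e1 p1] := has_ptr _ _ (delta_src e0) ae0.
case Hx: (hmax rank P) => [x|]; last first.
  by have := inP _ _ (availv_endpoint ae0 (delta_src e0)) p1; rewrite (hmax_none Hx).
case/mapP: (hmax_mem Hx) => es; rewrite mem_filter mem_enum andbT.
case/existsP=> v /andP[av /eqP pv] xe.
have [aes ins _] : pointer_ok M v (pq v) (Some es) by rewrite -pv; exact: ok.
have esv : es \in δ v by have [_ hmem _] := hinv v; have [] := hmem _ ins.
have esw := delta_other esv; have aw := availv_endpoint aes esw.
have [e' pw] := has_ptr _ _ esw aes.
have e'es : e' = es.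
  apply: pointer_agrees (hinv _) _ esw aes _; first by rewrite -pw; exact: ok.
  by rewrite -xe; exact: hmax_maximal Hx _ (inP _ _ aw pw).
rewrite e'es in pw; exists es; split=> //.
all: by case/other_cases: esv => -[su du]; rewrite ?su ?du.
Qed.

Lemma heap_inv_mono (M M' : {set E}) v h stamp :
  M \subset M' -> is_bmatching src dst b M' -> heap_inv M v h stamp -> heap_inv M' v h stamp.
Proof.
move=> sub HM' [uh hmem hall]; split=> //.
- by move=> x /hmem[xv xkey xsub]; split=> //; apply: subset_trans sub.
- by move=> e ev /(avail_edge_anti sub HM'); apply: hall.
Qed.

(* A worklist vertex costs at most [probe_cost + 1] in the update step and [3]
   in the matching step.  The scans around the edges matched in a round cost at
   most twice their [scan_cost] and enqueue at most that many vertices, which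
   [slack_rate] covers.  The last summand of the potential pays for the constant
   overhead of a round, since every round matches an edge. *)
Definition worklist_rate : nat := (probe_cost + 4)%N.
Definition slack_rate : nat := (2 * (worklist_rate + 1))%N.

Definition potential M pq (us : seq V) stamp : nat :=
  (total_charge pq stamp + worklist_rate * size us + slack_rate * slack src dst b M + #|~: M|)%N.

Definition loop_inv M pq (ptr : V -> option E) (us : seq V) stamp : Prop :=
  [/\ is_bmatching src dst b M /\ (forall v, heap_inv M v (pq v) (stamp v)), uniq us,
      (forall v e, ptr v = Some e -> e \in δ v),
      (forall v, availV M v -> v \notin us -> pointer_ok M v (pq v) (ptr v)) &
      no_mutual src dst b M ptr].

Lemma potential_drop M M' pq pq' (us us' : seq V) stamp stamp' c1 c2 tc S :
  (c1 + total_charge pq' stamp' <= total_charge pq stamp + (probe_cost + 1) * size us)%N ->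
  (c2 <= 3 * size us)%N -> (size us' <= tc)%N -> (tc <= 2 * S)%N ->
  slack src dst b M = (slack src dst b M' + S)%N -> (#|~: M'| < #|~: M|)%N ->
  (1 + c1 + c2 + tc + potential M' pq' us' stamp' <= potential M pq us stamp)%N.
Proof.
move=> cost1 cost2 us'_le tc_le slackE progress; rewrite /potential slackE mulnDr.
have h1 : (worklist_rate * size us' <= worklist_rate * tc)%N by rewrite leq_mul2l us'_le orbT.
have h2 : (worklist_rate * tc + tc <= slack_rate * S)%N.
  rewrite -[X in (_ + X <= _)%N]mul1n -mulnDl /slack_rate [(2 * _)%N]mulnC -mulnA.
  by rewrite leq_mul2l tc_le orbT.
have h3 : (worklist_rate * size us = (probe_cost + 1) * size us + 3 * size us)%N.
  by rewrite -mulnDl /worklist_rate -addnA.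
rewrite h3; move: h1 h2 cost1 cost2 progress.
move: (worklist_rate * size us')%N (worklist_rate * tc)%N (slack_rate * S)%N.
by move: ((probe_cost + 1) * size us)%N (3 * size us)%N (slack_rate * slack _ _ _ M')%N => *; lia.
Qed.

Lemma loop_round n M pq ptr us stamp : loop_inv M pq ptr us stamp ->
  (potential M pq us stamp < n.+1)%N -> (exists e, availE M e) ->
  exists pq' ptr' cs c1 M' nw c2 stamp',
    [/\ update_step src dst b f rank n M pq ptr us = Some (pq', ptr', cs, c1),
        match_step src dst b ptr' M (undup cs) = (M', nw, c2),
        loop_inv M' pq' ptr' (touched src dst b M' nw) stamp' &
        (1 + c1 + c2 + touched_cost src dst nw +
         potential M' pq' (touched src dst b M' nw) stamp' <= potential M pq us stamp)%N].
Proof.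
case=> [[HM hinv] uniq_us inc ok none] fuel ex_av.
have cM : (0 < #|~: M|)%N.
  by case: ex_av => e /and3P[eM _ _]; apply/card_gt0P; exists e; rewrite inE.
have fuel_us v : v \in us -> (heap_charge (pq v) (stamp v) < n)%N.
  move=> _; have := heap_charge_le_total pq stamp v; move: fuel cM; rewrite /potential.
  by move: (heap_charge _ _) (total_charge _ _) (worklist_rate * _)%N (slack_rate * _)%N => *; lia.
have [pq' [ptr' [cs [c1 [st' [upd [hinv' ok_us cost1]]]]]]] :=
  update_step_ok ptr HM uniq_us hinv fuel_us.
have [frame keep size_cs] := update_step_frame upd.
have ok' v : availV M v -> pointer_ok M v (pq' v) (ptr' v).
  move=> av; case vus: (v \in us); first exact: ok_us.
  have [-> ->] : pq' v = pq v /\ ptr' v = ptr v by apply: frame; rewrite vus.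
  by apply: ok; rewrite ?vus.
have inc' v e : ptr' v = Some e -> e \in δ v.
  case: (boolP ((v \notin us) || ~~ availV M v)) => [/frame[_ ->]|]; first exact: inc.
  rewrite negb_or !negbK => /andP[vus av] pv; move: (ok_us v vus av); rewrite pv => -[_ eh _].
  by have [_ hmem _] := hinv' v; case: (hmem _ eh).
have ptr_av : pointers_avail src dst b M ptr'.
  by move=> u e au pu; have := ok' u au; rewrite pu => -[ae _ _]; split; last exact: inc' pu.
case E2: (match_step src dst b ptr' M (undup cs)) => [[M' nw] c2].
have [c2E [sub HM'] memM [old cnt] mut] := match_step_ok (subxx M) HM ptr_av E2.
have none' : no_mutual src dst b M' ptr'.
  have keep' v : v \notin undup cs -> ptr' v = ptr v by rewrite mem_undup; exact: keep.
  exact: (no_mutual_after_match loopless sub HM' keep' mut none).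
have progress : (#|~: M'| < #|~: M|)%N.
  have [es [aes ps pd]] := exists_mutual_pointer hinv' ok' ex_av.
  apply/proper_card; rewrite properC properEneq sub andbT.
  by apply: contraTneq aes => eqM; apply/negP => aes; apply: (none' es); rewrite -?eqM.
have new e : e \in M' -> e \notin M -> e \in nw.
  by move=> eM' eM; move: eM'; rewrite memM (negbTE eM).
exists pq', ptr', cs, c1, M', nw, c2, st'; split=> //.
  split=> //; first by split=> // v; apply: heap_inv_mono sub HM' (hinv' v).
  - exact: undup_uniq.
  - move=> x ax far; have okx := ok' x (availv_anti sub HM' ax).
    exact: pointer_ok_untouched sub HM' new ax far (inc' x) okx.
have nw_new e : e \in nw -> e \in M' :\: M by move=> en; rewrite inE (old e en) memM en orbT.
apply: potential_drop cost1 _ (size_touched _ _ _ _ _) (touched_cost_le (undup_uniq cs) cnt nw_new)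
  (slack_split loopless sub HM') progress.
by rewrite c2E leq_mul2l (leq_trans (size_undup cs) size_cs) orbT.
Qed.

Lemma main_loop_ok n M pq ptr us stamp : loop_inv M pq ptr us stamp ->
  (potential M pq us stamp < n)%N ->
  exists c, main_loop src dst b f rank n M pq ptr us = Some c /\
            (c <= potential M pq us stamp)%N.
Proof.
elim: n M pq ptr us stamp => // n IH M pq ptr us stamp inv fuel /=.
case: ifP => [/existsP ex_av|_]; last by exists 0%N.
have [pq' [ptr' [cs [c1 [M' [nw [c2 [st' [-> -> inv' drop]]]]]]]]] := loop_round inv fuel ex_av.
have [c [-> le_c]] := IH _ _ _ _ _ inv' (leq_trans (leq_ltn_trans (leq_addl _ _) drop) fuel).
by exists (c + 1 + c1 + c2 + touched_cost src dst nw)%N; split=> //; lia.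
Qed.

Definition stamp0 : V -> E -> {set E} := fun _ _ => set0.

Lemma map_snd_pq0 v : map snd (pq0 src dst f v) = enum (δ v).
Proof. by rewrite /pq0 -map_comp map_id. Qed.

Lemma loop_inv_init : loop_inv set0 (pq0 src dst f) (ptr0 E) (us0 src dst) stamp0.
Proof.
split=> //.
- split=> [v|v]; first by rewrite set0I cards0.
  split=> [|x /mapP[e ein ->]|e ev _]; rewrite ?map_snd_pq0 ?enum_uniq ?mem_enum //.
  by rewrite mem_enum in ein; split; rewrite ?sub0set // /rho /stamp0 setU0 f_normalized subr0.
- exact: filter_uniq (enum_uniq _).
- move=> v _; rewrite /us0 mem_filter mem_enum andbT -leqNgt leqn0 => /eqP/cards0_eq dv0.
  by move=> e; rewrite dv0 inE.
- by move=> e _ [].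
Qed.

Lemma total_charge_init :
  total_charge (pq0 src dst f) stamp0 = (2 * #|E| * (probe_cost * (1 + 2 * beta b)))%N.
Proof.
rewrite /total_charge -(sum_card_delta loopless) big_distrl /=; apply: eq_bigr => v _.
rewrite /heap_charge /pq0 big_map big_enum /=.
under eq_bigr => e _ do rewrite /entry_charge /stamp0 set0I cards0 subn0.
by rewrite sum_nat_const.
Qed.

Lemma size_us0_le : (size (us0 src dst) <= 2 * #|E|)%N.
Proof.
rewrite -(sum_card_delta loopless) /us0 size_filter -sum1_count big_enum_cond /=.
by rewrite big_mkcond /=; apply: leq_sum => v _; case: ifP => //; rewrite lt0n => /negbTE->.
Qed.

Lemma slack_init : (slack src dst b set0 <= 2 * #|E| * beta b + 2 * #|E|)%N.
Proof.
rewrite /slack setC0 cardsT leq_add2r -(sum_card_delta loopless) big_distrl /=.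
by apply: leq_sum => v _; rewrite set0I cards0 subn0 leq_mul2l b_le_beta orbT.
Qed.

Lemma init_cost_le : (init_cost src dst <= 2 * #|E| * (log_maxdeg + 1) + 2 * #|E|)%N.
Proof.
rewrite /init_cost leq_add ?size_us0_le // -(sum_card_delta loopless) big_distrl /=.
apply: leq_sum => v _; rewrite leq_mul2l /log_maxdeg addn1 add2n !ltnS.
by rewrite leq_trunc_log ?card_delta_le_maxdeg ?orbT.
Qed.

Lemma llg_cost_bound : exists n c, llg_cost src dst b f rank n = Some c /\
  (c <= 200 * maxn 1 (beta b) * #|E| * log_maxdeg)%N.
Proof.
set P0 := potential set0 (pq0 src dst f) (us0 src dst) stamp0.
have [c [run le_c]] := main_loop_ok loop_inv_init (ltnSn P0).
exists P0.+1, (init_cost src dst + c)%N; split; first by rewrite /llg_cost run.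
apply: leq_trans (leq_add init_cost_le le_c) _.
rewrite /P0 /potential total_charge_init setC0 cardsT.
have us_le : (worklist_rate * size (us0 src dst) <= worklist_rate * (2 * #|E|))%N.
  by rewrite leq_mul2l size_us0_le orbT.
have slack_le : (slack_rate * slack src dst b set0 <=
                 slack_rate * (2 * #|E| * beta b + 2 * #|E|))%N.
  by rewrite leq_mul2l slack_init orbT.
move: us_le slack_le; rewrite /slack_rate /worklist_rate /probe_cost.
have := leq_maxr 1 (beta b); have := leq_maxl 1 (beta b); have : (0 < log_maxdeg)%N by [].
move: (maxn 1 (beta b)) (size (us0 src dst)) (slack src dst b set0) #|E| log_maxdeg (beta b).
move=> B u s m l x; nia.
Qed.

End LocalLazyGreedy.

Theorem lemma3 :
  exists C : nat,
  forall (R : realFieldType) (V E : finType) (src dst : E -> V)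
         (b : V -> nat) (f : {set E} -> R) (rank : E -> nat),
    simple_graph src dst ->
    injective rank ->
    normalized f -> nonneg f -> monotone f -> submodular f ->
    local_dependence src dst f ->
    exists (n c : nat),
      llg_cost src dst b f rank n = Some c /\
      (c <= C * maxn 1 (beta b) * #|E| * (trunc_log 2 (maxdeg src dst)).+1)%N.
Proof.
exists 200%N => R V E src dst b f rank [loopless _] rank_inj f0 _ _ f_sub f_loc.
exact: llg_cost_bound.
Qed.
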